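(* Every rule in the SEJR subfamily, for every choice of the completion subprocedure Alg3 and every tie-breaking, outputs a committee that provides EJR for $(\mathcal{A},k)$.
   Context: Setting: voters $N=\{1,\dots,n\}$, candidates $C=\{c_1,\dots,c_m\}$, approval ballots $A_i\subseteq C$, $\mathcal{A}=(A_1,\dots,A_n)$, $k\le m$ a positive integer. EJR: for $\ell\in\{1,\dots,k\}$, $N^*\subseteq N$ is $\ell$-cohesive if $|N^*|\ge\ell n/k$ and $|\bigcap_{i\in N^*}A_i|\ge\ell$. A committee $W$, $|W|=k$, provides EJR if for every $\ell$ and every $\ell$-cohesive $N^*$ some $i\in N^*$ has $|A_i\cap W|\ge\ell$. Dissatisfaction level: for $W\subseteq C$ with $|W|\le k$ and $c\in C\setminus W$, $\ell(c,W)$ is the largest nonnegative integer $\ell$ with $\ell=\lfloor \frac{k}{n}|\{i\in N: c\in A_i,\ |A_i\cap W|<\ell\}|\rfloor$. SEJR subfamily (parametrized by a subprocedure Alg3): start with $W=\emptyset$. While $|W|<k$ and $\max_{c\in C\setminus W}\ell(c,W)>0$, add to $W$ a candidate $c\in C\setminus W$ maximizing $\ell(c,W)$ (ties broken arbitrarily). Afterwards, if $|W|<k$, Alg3 adds arbitrary candidates from $C\setminus W$ until $|W|=k$. Output $W$. *)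

From mathcomp Require Import all_boot.
Set Implicit Arguments. Unset Strict Implicit. Unset Printing Implicit Defensive.

Section SEJR.
Variables (n : nat) (C : finType) (A : 'I_n -> {set C}) (k : nat).

Definition cohesive (l : nat) (Ns : {set 'I_n}) : Prop :=
  l * n <= k * #|Ns| /\ l <= #|\bigcap_(i in Ns) A i|.

Definition EJR (W : {set C}) : Prop :=
  #|W| = k /\
  forall l : nat, 1 <= l <= k ->
  forall Ns : {set 'I_n}, cohesive l Ns ->
  exists2 i, i \in Ns & l <= #|A i :&: W|.

Definition is_level (c : C) (W : {set C}) (l : nat) : bool :=
  l == (k * #|[set i | (c \in A i) && (#|A i :&: W| < l)]|) %/ n.

(* Every solution l of the
   fixpoint equation satisfies l <= k (when n > 0), and l = 0 is a solution,
   so taking the max over l <= k is the largest solution. *)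
Definition dlevel (c : C) (W : {set C}) : nat :=
  \max_(l < k.+1 | is_level c W l) l.

(* W is a possible output of some SEJR rule (any tie-breaking, any Alg3):
   s lists the candidates chosen greedily in order; afterwards Alg3 adds
   arbitrary candidates to reach size k. *)
Definition sejr_output (W : {set C}) : Prop :=
  exists s : seq C,
    uniq s /\ size s <= k /\
    (forall (s1 : seq C) (c : C) (s2 : seq C), s = s1 ++ c :: s2 ->
        c \notin [set x in s1] /\ 0 < dlevel c [set x in s1] /\
        (forall d, d \notin [set x in s1] ->
           dlevel d [set x in s1] <= dlevel c [set x in s1])) /\
    (size s = k \/
     forall d, d \notin [set x in s] -> dlevel d [set x in s] = 0) /\
    [set x in s] \subset W /\ #|W| = k.

End SEJR.

From mathcomp Require Import all_boot all_order all_algebra zify.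

Set Implicit Arguments.
Unset Strict Implicit.
Unset Printing Implicit Defensive.

(** Suppose a cohesive group of voters [Ns] stays unsatisfied. Then at every
    step of the greedy phase some common candidate of [Ns] still has level at
    least [l], so every candidate picked has level at least [l]; this also
    rules out an early stop. When a candidate of level [lambda] is picked, the
    at least [lambda n / k] voters that approve it and have fewer than
    [lambda] approved winners are each charged [1 / lambda]. Since levels do
    not increase along the run, a voter's load never exceeds [1], and it stays
    below [1] for a voter of [Ns]. But the [k] steps charge at least [n] in
    total: a contradiction. *)

Lemma homo_fixpoint_ge (f : nat -> nat) (b x : nat) :
  {homo f : p q / p <= q} -> (forall p, f p <= b) -> x <= f x ->
  exists2 y, x <= y & f y = y.
Proof.
move=> f_homo f_le; move: {2}(b - x) (leqnn (b - x)) => d.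
elim: d x => [|d IH] x dx xf.
  by exists x => //; apply/eqP; rewrite eqn_leq xf andbT; have := f_le x; lia.
have [fx|fx] := eqVneq (f x) x; first by exists x.
have lt_x_fx : x < f x by rewrite ltn_neqAle eq_sym fx xf.
have [|y fxy fy] := IH (f x) _ (f_homo _ _ xf); first by have := f_le x; lia.
by exists y; first exact: ltnW (leq_trans lt_x_fx fxy).
Qed.

Section SEJRRule.
Variables (n : nat) (C : finType) (A : 'I_n -> {set C}) (k : nat).

Definition underserved (c : C) (W : {set C}) (l : nat) : {set 'I_n} :=
  [set i | (c \in A i) && (#|A i :&: W| < l)].

(* [dlevel c W] is the largest fixpoint of this map. *)
Definition level_map (c : C) (W : {set C}) (l : nat) : nat :=
  k * #|underserved c W l| %/ n.

Lemma level_map_le_k c (W : {set C}) l : level_map c W l <= k.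
Proof.
rewrite /level_map; have : #|underserved c W l| <= n.
  by rewrite -[X in _ <= X]card_ord max_card.
have [n0|n_gt0] := posnP n; first by rewrite [X in _ %/ X]n0 divn0.
move=> le_n; apply: leq_trans (leq_div2r n (leq_mul (leqnn k) le_n)) _.
by rewrite mulnK.
Qed.

Lemma level_map_homo c (W : {set C}) : {homo level_map c W : l l' / l <= l'}.
Proof.
move=> l l' ll'; apply/leq_div2r/leq_mul/subset_leq_card => //.
by apply/subsetP => i; rewrite !inE => /andP[-> /leq_trans]; apply.
Qed.

Lemma level_map_anti c (W W' : {set C}) l :
  W \subset W' -> level_map c W' l <= level_map c W l.
Proof.
move=> sWW'; apply/leq_div2r/leq_mul/subset_leq_card => //.
apply/subsetP => i; rewrite !inE => /andP[-> /(leq_ltn_trans _)]; apply.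
exact/subset_leq_card/setIS.
Qed.

Lemma dlevel_ge c (W : {set C}) l : l <= level_map c W l -> l <= dlevel A k c W.
Proof.
move=> l_le; have [y ly fy] := homo_fixpoint_ge (level_map_homo c W)
  (level_map_le_k c W) l_le.
have yk : y < k.+1 by rewrite ltnS -fy level_map_le_k.
apply: leq_trans ly (leq_bigmax_cond (Ordinal yk) _).
by apply/eqP; rewrite -[RHS]/(level_map c W y) fy.
Qed.

Lemma dlevel_fixpoint c (W : {set C}) :
  level_map c W (dlevel A k c W) = dlevel A k c W.
Proof.
have level0 : is_level A k c W (@ord0 k).
  rewrite /is_level (_ : [set i | _] = set0) ?cards0 ?muln0 ?div0n //.
  by apply/setP => i; rewrite !inE andbF.
rewrite /dlevel; have [|l /eqP l_fix ->] := eq_bigmax_cond val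
  (A := fun l : 'I_k.+1 => is_level A k c W l).
  by apply/card_gt0P; exists ord0.
exact: esym l_fix.
Qed.

Lemma dlevel_anti c (W W' : {set C}) :
  W \subset W' -> dlevel A k c W' <= dlevel A k c W.
Proof.
move=> sWW'; apply: dlevel_ge.
by rewrite -{1}dlevel_fixpoint; apply: level_map_anti.
Qed.

Lemma cohesive_nonempty l Ns : 0 < n -> 0 < l -> cohesive A k l Ns ->
  exists i, i \in Ns.
Proof.
move=> n_gt0 l_gt0 [lnk _]; apply/set0Pn; rewrite -card_gt0 lt0n.
by apply: contraTneq lnk => ->; rewrite muln0 -ltnNge muln_gt0 l_gt0.
Qed.

Lemma unsat_cohesive_dlevel l Ns (W W' : {set C}) :
  0 < n -> 0 < l -> cohesive A k l Ns ->
  {in Ns, forall i, #|A i :&: W| < l} -> W' \subset W ->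
  exists2 c, c \notin W' & l <= dlevel A k c W'.
Proof.
move=> n_gt0 l_gt0 coh unsat sW'W.
have [i0 i0Ns] := cohesive_nonempty n_gt0 l_gt0 coh.
case: coh => lnk; set I := \bigcap_(i in Ns) A i => lI.
have sIA i : i \in Ns -> I \subset A i by move=> iNs; apply: bigcap_inf.
have card_le i : #|A i :&: W'| <= #|A i :&: W| by apply/subset_leq_card/setIS.
have IW'_lt : #|I :&: W'| < l.
  apply: leq_ltn_trans (leq_ltn_trans (card_le i0) (unsat _ i0Ns)).
  exact/subset_leq_card/setSI/sIA.
have [c] : exists c, c \in I :\: W'.
  by apply/set0Pn; rewrite -card_gt0; have := cardsID W' I; lia.
rewrite inE => /andP[cW' cI]; exists c => //; apply: dlevel_ge.
rewrite /level_map leq_divRL //; apply: leq_trans lnk _; rewrite leq_mul2l.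
apply/orP; right; apply/subset_leq_card/subsetP => i iNs; rewrite inE.
by rewrite (subsetP (sIA i iNs)) //= (leq_ltn_trans (card_le i) (unsat i iNs)).
Qed.

Section GreedyRun.
Variables (s : seq C) (x0 : C).
Hypothesis greedy : forall s1 c s2, s = s1 ++ c :: s2 ->
  c \notin [set x in s1] /\ 0 < dlevel A k c [set x in s1] /\
  (forall d, d \notin [set x in s1] ->
     dlevel A k d [set x in s1] <= dlevel A k c [set x in s1]).

Definition pick t := nth x0 s t.
Definition chosen t := [set x in take t s].
Definition step_level t := dlevel A k (pick t) (chosen t).
Definition charged t := underserved (pick t) (chosen t) (step_level t).

Lemma chosen_succ t : t < size s -> chosen t.+1 = pick t |: chosen t.
Proof.
move=> ts; apply/setP => x.
by rewrite /chosen (take_nth x0 ts) !inE mem_rcons inE.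
Qed.

Lemma greedy_step t : t < size s ->
  [/\ pick t \notin chosen t, 0 < step_level t &
  forall d, d \notin chosen t -> dlevel A k d (chosen t) <= step_level t].
Proof.
move=> ts; have decomp : s = take t s ++ pick t :: drop t.+1 s.
  by rewrite /pick -drop_nth // cat_take_drop.
by have [? []] := greedy decomp.
Qed.

Lemma chosen_sub t : chosen t \subset [set x in s].
Proof. by apply/subsetP => x; rewrite !inE => /mem_take. Qed.

Lemma chosen_mono t t' : t <= t' -> chosen t \subset chosen t'.
Proof.
move=> tt'; apply/subsetP => x.
by rewrite !inE -(subnKC tt') takeD mem_cat => ->.
Qed.

Lemma step_level_succ t : t.+1 < size s -> step_level t.+1 <= step_level t.
Proof.
move=> t1s; have [fresh _ _] := greedy_step t1s.
have [_ _ maxl] := greedy_step (ltnW t1s).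
apply: leq_trans (dlevel_anti _ (chosen_mono (leqnSn t))) (maxl _ _).
by apply: contra fresh; apply/subsetP/chosen_mono.
Qed.

Lemma step_level_nonincr t t' : t <= t' -> t' < size s ->
  step_level t' <= step_level t.
Proof.
elim: t' => [|t' IH]; first by rewrite leqn0 => /eqP ->.
rewrite leq_eqVlt => /orP[/eqP -> //|tt' t's].
exact: leq_trans (step_level_succ t's) (IH tt' (ltnW t's)).
Qed.

Lemma card_chosen_charged i t : t < size s -> i \in charged t ->
  #|A i :&: chosen t.+1| = #|A i :&: chosen t|.+1.
Proof.
move=> ts; rewrite inE => /andP[pick_i _]; have [fresh _ _] := greedy_step ts.
rewrite chosen_succ // setIUr (setIidPr _) ?sub1set // cardsU1.
by rewrite inE (negbTE fresh) andbF.
Qed.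

Local Open Scope ring_scope.
Import Order.TTheory GRing.Theory Num.Theory.

Definition charge i t : rat :=
  if i \in charged t then (step_level t)%:R^-1 else 0.
Definition load i T : rat := \sum_(t < T) charge i t.

Lemma load_scaled_le mu i T : (T <= size s)%N ->
  (forall t, (t < T)%N -> (mu <= step_level t)%N) ->
  mu%:R * load i T <= #|A i :&: chosen T|%:R.
Proof.
elim: T => [|T IH] Ts mu_le; first by rewrite /load big_ord0 mulr0.
have [_ level_gt0 _] := greedy_step Ts.
rewrite /load big_ord_recr /= -/(load i T) mulrDr /charge.
have IH' := IH (ltnW Ts) (fun t tT => mu_le t (ltnW tT)).
case: ifP => [charged_i|_]; last first.
  rewrite mulr0 addr0 (le_trans IH') // ler_nat.
  exact/subset_leq_card/setIS/chosen_mono.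
rewrite card_chosen_charged // -addn1 natrD lerD //.
by rewrite ler_pdivrMr ?ltr0n // mul1r ler_nat mu_le.
Qed.

(* A voter charged at step [T] holds fewer than [step_level T] approved
   candidates, each of which cost it at least [1 / step_level T]. *)
Lemma load_le1 i T : (T <= size s)%N -> load i T <= 1.
Proof.
elim: T => [|T IH] Ts; first by rewrite /load big_ord0 ler01.
rewrite /load big_ord_recr /= -/(load i T) /charge.
case: ifP => [charged_i|_]; last by rewrite addr0 IH // ltnW.
have [_ level_gt0 _] := greedy_step Ts.
have le_card := load_scaled_le i (ltnW Ts)
  (fun t tT => step_level_nonincr (ltnW tT) Ts).
have lt_level : (#|A i :&: chosen T| < step_level T)%N.
  by move: charged_i; rewrite inE => /andP[].
rewrite -(ler_pM2l (_ : 0 < (step_level T)%:R)) ?ltr0n //.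
rewrite mulrDr mulfV ?pnatr_eq0 -?lt0n //.
by rewrite mulr1 (le_trans (lerD le_card (lexx 1))) // natr1 ler_nat.
Qed.

Lemma charge_sum_ge t : (0 < k)%N -> (t < size s)%N ->
  n%:R / k%:R <= \sum_(i < n) charge i t.
Proof.
move=> k_gt0 ts; have [_ level_gt0 _] := greedy_step ts.
have many_charged : (step_level t * n <= k * #|charged t|)%N.
  by rewrite {1}/step_level -dlevel_fixpoint leq_divM.
rewrite /charge -big_mkcond /= sumr_const ler_pdivrMr ?ltr0n //.
rewrite -[_ *+ #|charged t|]mulr_natl mulrAC ler_pdivlMr ?ltr0n //.
rewrite -!natrM ler_nat.
by rewrite mulnC [X in (_ <= X)%N]mulnC.
Qed.

Lemma greedy_full_run_ge l i : (0 < k)%N -> size s = k ->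
  (forall t, (t < size s)%N -> (l <= step_level t)%N) ->
  (l <= #|A i :&: chosen (size s)|)%N.
Proof.
move=> k_gt0 sk levels_ge; rewrite leqNgt; apply/negP => lt_l.
have total : n%:R <= \sum_(i < n) load i (size s).
  rewrite /load exchange_big /=.
  apply: le_trans (ler_sum _ (fun t _ => charge_sum_ge k_gt0 (ltn_ord t))).
  rewrite sumr_const card_ord sk -[_ / _ *+ k]mulr_natr.
  by rewrite divfK ?pnatr_eq0 -?lt0n.
have load_i_lt1 : load i (size s) < 1.
  have l_gt0 : (0 < l)%N := leq_ltn_trans (leq0n _) lt_l.
  rewrite -(ltr_pM2l (_ : 0 < l%:R)) ?ltr0n // mulr1.
  by rewrite (le_lt_trans (load_scaled_le i (leqnn _) levels_ge)) // ltr_nat.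
have : \sum_(j < n) load j (size s) < n%:R.
  rewrite -[n in n%:R]card_ord -sumr_const (bigD1 i) // [X in _ < X](bigD1 i) //=.
  by rewrite ltr_leD // ler_sum // => j _; apply: load_le1.
by rewrite ltNge total.
Qed.

End GreedyRun.
End SEJRRule.

Theorem mainTheorem10 (n : nat) (C : finType) (A : 'I_n -> {set C}) (k : nat)
  (W : {set C}) :
  0 < n -> 0 < k -> k <= #|C| ->
  sejr_output A k W -> EJR A k W.
Proof.
move=> n_gt0 k_gt0 _ [s [_ [_ [greedy [stop [sW cardW]]]]]].
split=> // l /andP[l_gt0 _] Ns coh.
have [/exists_inP[i iNs li] | /exists_inPn unsat] :=
  boolP [exists i in Ns, l <= #|A i :&: W|]; first by exists i.
have {}unsat : {in Ns, forall i, #|A i :&: W| < l}.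
  by move=> i /unsat; rewrite ltnNge.
exfalso; have [i iNs] := cohesive_nonempty n_gt0 l_gt0 coh.
case: stop => [sk | no_level].
  have /hasP[x0 _ _] : has predT s by rewrite has_predT sk.
  have levels_ge t : t < size s -> l <= step_level A k s x0 t.
    move=> ts; have [_ _ maxl] := greedy_step x0 greedy ts.
    have [c c_out c_level] := unsat_cohesive_dlevel n_gt0 l_gt0 coh unsat
      (subset_trans (chosen_sub s t) sW).
    exact: leq_trans c_level (maxl c c_out).
  have := greedy_full_run_ge greedy i k_gt0 sk levels_ge.
  apply/negP; rewrite -ltnNge (leq_ltn_trans _ (unsat i iNs)) //.
  exact/subset_leq_card/setIS/(subset_trans (chosen_sub _ _)).
have [c c_out] := unsat_cohesive_dlevel n_gt0 l_gt0 coh unsat sW.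
by rewrite no_level // leqNgt l_gt0.
Qed.
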